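(* Let $n\ge1$ and let $\mathcal{D}_{S_1},\mathcal{D}_{S_2}\subseteq\mathcal{D}_{[n]}\setminus\{n\}$ be such that $\mathrm{ICG}(n,\mathcal{D}_{S_1})$ and $\mathrm{ICG}(n,\mathcal{D}_{S_2})$ are isospectral. Let $\mathcal{D}_R\subseteq\mathcal{D}_{[n]}$ be such that $\lambda_d(S_1)=\lambda_d(S_2)$ for all $d\in\mathcal{D}_R$. Let $\mathcal{D}_T\subseteq\mathcal{D}_{[n]}\setminus\mathcal{D}_R$ be such that (1) there is $d_0\in\mathcal{D}_T$ with $\lambda_d(S_1)=\lambda_{d_0}(S_1)$ for all $d\in\mathcal{D}_T$, and (2) $\sum_{d\in\mathcal{D}_T}\phi(n/d)>n-\sum_{d\in\mathcal{D}_R}\phi(n/d)-\sum_{d\in\mathcal{D}_T}\phi(n/d)$. Then there exists $d_0'\in\mathcal{D}_T$ with $\lambda_{d_0'}(S_2)=\lambda_{d_0}(S_1)$. In particular, if $\mathcal{D}_T=\{d_0\}$ then $\lambda_{d_0}(S_1)=\lambda_{d_0}(S_2)$.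
   Context: Identify $\mathbb{Z}_n$ with $[n]=\{1,\dots,n\}$. For a divisor $d$ of $n$, $G_n(d)=\{j\in[n]:\gcd(j,n)=d\}$; $\mathcal{D}_{[n]}$ is the set of positive divisors of $n$. For $\mathcal{D}\subseteq\mathcal{D}_{[n]}\setminus\{n\}$, $\mathrm{ICG}(n,\mathcal{D})=\mathrm{Cay}(\mathbb{Z}_n,S)$ with $S=\bigcup_{d\in\mathcal{D}}G_n(d)$, and $\mathcal{D}=\mathcal{D}_S$. For $k\in[n]$, $\lambda_k(S)=\sum_{g\in S}e^{2\pi\iota kg/n}$; the eigenvalues of $\mathrm{Cay}(\mathbb{Z}_n,S)$ with multiplicity are $\lambda_1(S),\dots,\lambda_n(S)$. $\phi$ is Euler's totient function. Isospectral means having the same multiset of adjacency eigenvalues. *)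

From mathcomp Require Import all_boot all_order all_algebra.
From mathcomp Require Import complex.
From mathcomp Require Import all_classical all_reals all_analysis.
Set Implicit Arguments. Unset Strict Implicit. Unset Printing Implicit Defensive.
Import GRing.Theory Num.Theory ComplexField.
Local Open Scope ring_scope.
Local Open Scope complex_scope.

Definition expi (R : realType) (x : R) : R[i] := cos x +i* sin x.

(* Z_n identified with [n] = {1,...,n}.  For a set D of divisors of n,
   S_D = union over d in D of G_n(d) = { j in [n] : gcd(j,n) in D }. *)
Definition ICG_conn (n : nat) (D : pred nat) : pred nat :=
  fun j => (0 < j <= n)%N && (gcdn j n \in D).

Definition lam (R : realType) (n : nat) (D : pred nat) (k : nat) : R[i] :=
  \sum_(1 <= g < n.+1 | ICG_conn n D g)
     expi (2 * pi * (k * g)%:R / n%:R).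

(* eigenvalues with multiplicity: lambda_1(S), ..., lambda_n(S) *)
Definition spectrum (R : realType) (n : nat) (D : pred nat) : seq R[i] :=
  [seq lam R n D k | k <- iota 1 n].

Definition isospectral (R : realType) (n : nat) (D1 D2 : pred nat) : bool :=
  perm_eq (spectrum R n D1) (spectrum R n D2).

Definition phisum (n : nat) (D : pred nat) : nat :=
  \sum_(d <- divisors n | d \in D) totient (n %/ d).

From mathcomp Require Import all_boot all_order all_algebra.
From mathcomp Require Import complex.
From mathcomp Require Import all_classical all_reals all_analysis.
From mathcomp Require Import zify ring.
Import GRing.Theory Num.Theory ComplexField.

(* The eigenvalue lambda_k(S) depends only on gcd(k, n): multiplication by a unit
   u of Z_n permutes every class G_n(d), so lambda_{uk} = lambda_k, and every k is
   a unit multiple of gcd(k, n) modulo n.  Hence the value lambda_{d0}(S_1) is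
   taken at least phisum(D_T) times at the indices k with gcd(k, n) in D_T, and
   at the indices with gcd(k, n) in D_R both spectra agree.  If no d in D_T had
   lambda_d(S_2) = lambda_{d0}(S_1), the missing multiplicity in the spectrum of
   S_2 would have to come from the n - phisum(D_R) - phisum(D_T) remaining
   indices, which are too few by hypothesis (2). *)

(* The sum is congruent to a modulo t = n`_(\pi(a)^'), hence coprime to t, and it
   is coprime to a, hence to the \pi(a)-part of n. *)
Lemma coprime_add_mul_partn a m n : 0 < a -> 0 < n -> coprime a m ->
  coprime (a + m * n`_(\pi(a)^')) n.
Proof.
move=> a0 n0 cam; set t := n`_(\pi(a)^'); set u := a + m * t.
have cat : coprime a t by apply: pnat_coprime (pnat_pi a0) (part_pnat _ _).
have cau : coprime a u by rewrite /coprime gcdnDl -/(coprime a (m * t)) coprimeMr cam.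
have cut : coprime u t by rewrite coprime_sym /coprime /u addnC gcdnMDl gcdnC.
have u0 : 0 < u by rewrite addn_gt0 a0.
have cus : coprime u n`_\pi(a).
  by apply: (p'nat_coprime _ (part_pnat _ _)); rewrite -coprime_pi'.
by rewrite -(partnC \pi(a) n0) coprimeMr cus.
Qed.

Lemma gcdn_unit_multiple k n : 0 < n ->
  exists2 u, coprime u n & u * gcdn k n = k %[mod n].
Proof.
move=> n0; case: (posnP k) => [->|k0].
  by exists 1; rewrite ?coprime1n // gcd0n mul1n modnn mod0n.
set d := gcdn k n; have d0 : 0 < d by rewrite gcdn_gt0 k0.
have [ka nm] : k = k %/ d * d /\ n = n %/ d * d.
  by rewrite !divnK ?dvdn_gcdl ?dvdn_gcdr.
have a0 : 0 < k %/ d by rewrite divn_gt0 // dvdn_leq // dvdn_gcdl.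
have cam : coprime (k %/ d) (n %/ d).
  by rewrite /coprime -(eqn_pmul2r d0) muln_gcdl -ka -nm mul1n.
exists (k %/ d + n %/ d * n`_(\pi(k %/ d)^')); first exact: coprime_add_mul_partn.
by rewrite mulnDl -ka mulnAC -nm addnC mulnC modnMDl.
Qed.

Lemma coprime_mul_mod_inj u n i j : coprime u n -> i < n -> j < n ->
  u * i = u * j %[mod n] -> i = j.
Proof.
move=> cun; wlog ij : i j / i <= j => [hw lt_in lt_jn eqij|_ lt_jn /eqP].
  case/orP: (leq_total i j) => /hw; first exact.
  by move/(_ lt_jn lt_in (esym eqij)).
rewrite eq_sym eqn_mod_dvd ?leq_mul2l ?ij ?orbT // -mulnBr Gauss_dvdr; last first.
  by rewrite coprime_sym.
rewrite /dvdn modn_small ?subn_eq0 => [ji|]; first by apply/eqP; rewrite eqn_leq ij.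
exact: leq_ltn_trans (leq_subr _ _) lt_jn.
Qed.

Lemma count_iota1 (p : pred nat) n : p n = p 0 -> count p (iota 1 n) = count p (iota 0 n).
Proof.
move=> pn0; have := congr1 (count p) (iotaD 0 n 1).
by rewrite addn1 /= count_cat /= pn0; lia.
Qed.

Lemma count_fibres (T U : eqType) (f : T -> U) (P : pred U) (r : seq U) (s : seq T) :
  uniq r -> {in s, forall x, f x \in r} ->
  count (fun x => P (f x)) s = \sum_(y <- r | P y) count (fun x => f x == y) s.
Proof.
move=> ur; elim: s => [|x s IH] fr /=; first by rewrite big1.
rewrite big_split /= -IH => [|y ys]; last by apply: fr; rewrite inE ys orbT.
congr (_ + _); rewrite -[P (f x)]andbT -(fr x (mem_head _ _)) -mem_filter.
rewrite -count_uniq_mem ?filter_uniq // -sum1_count big_filter_cond big_mkcondr.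
by apply: eq_bigr => y _ /=; rewrite eq_sym; case: (f x == y).
Qed.

Lemma count_gcdn_eq n d : 0 < n -> d %| n ->
  count (fun k => gcdn k n == d) (iota 0 n) = totient (n %/ d).
Proof.
move=> n0 /dvdnP[m nm]; have /andP[m0 d0] : (0 < m) && (0 < d) by rewrite -muln_gt0 -nm.
rewrite nm mulnK // totient_count_coprime -sumn_count sumnE big_map.
have -> : iota 0 (m * d) = index_iota 0 (m * d) by rewrite /index_iota subn0.
rewrite big_nat_mul; apply: eq_bigr => i _.
rewrite big_ltn ?ltn_pmul2r // -muln_gcdl -{2}(mul1n d) eqn_pmul2r // gcdnC.
rewrite big1_seq /= ?addn0 // => j; rewrite mem_index_iota => /andP[lt_ij lt_ji].
apply/eqP; rewrite eqb0; apply/negP => /eqP gjd.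
have /dvdnP[q jq] : d %| j by rewrite -gjd dvdn_gcdl.
by move: lt_ij lt_ji; rewrite jq !ltn_pmul2r //; lia.
Qed.

Lemma count_gcdn_in n (D : pred nat) : 0 < n -> {in D, forall d, d %| n} ->
  count (fun k => gcdn k n \in D) (iota 1 n) = phisum n D.
Proof.
move=> n0 Dn; rewrite count_iota1 ?gcdnn ?gcd0n //.
rewrite (count_fibres _ _ _ _ _ _ (divisors_uniq n)) => [|k _]; last first.
  by rewrite -dvdn_divisors ?dvdn_gcdr.
rewrite /phisum big_seq_cond [RHS]big_seq_cond; apply: eq_bigr => d /andP[_ dD].
exact: count_gcdn_eq n0 (Dn d dD).
Qed.

(* Pointwise 2 a + b + c2 <= 1 + c1 on s; summing and cancelling count c1 = count c2
   gives 2 count a + count b <= size s. *)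
Lemma has_count_pigeonhole (T : eqType) (s : seq T) (a b c1 c2 : pred T) :
  {in s, forall x, a x -> c1 x && ~~ b x} ->
  {in s, forall x, b x -> c1 x = c2 x} ->
  count c1 s = count c2 s ->
  size s < 2 * count a s + count b s ->
  has (predI a c2) s.
Proof.
move=> ac1 bc eq_c; apply: contraTT; rewrite -leqNgt => /hasPn no_ac2.
have pt : {in s, forall x, 2 * a x + b x + c2 x <= 1 + c1 x}.
  move=> x xs; move: (ac1 x xs) (bc x xs) (no_ac2 x xs) => /=.
  by case: (a x); case: (b x); case: (c1 x); case: (c2 x).
have countE p : count p s = \sum_(x <- s) p x by rewrite -sumn_count sumnE big_map.
have : \sum_(x <- s) (2 * a x + b x + c2 x) <= \sum_(x <- s) (1 + c1 x).
  by rewrite big_seq [leqRHS]big_seq; apply: leq_sum.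
by rewrite !big_split /= -!countE big1_eq sum1_size; lia.
Qed.

Local Open Scope ring_scope.

Definition zeta (R : realType) (n k : nat) : R[i] := expi (2 * pi * k%:R / n%:R).

Lemma zeta_mod (R : realType) n k : (0 < n)%N -> zeta R n k = zeta R n (k %% n).
Proof.
move=> n0; rewrite {1}(divn_eq k n) /zeta /expi.
have n0R : (n%:R : R) != 0 by rewrite pnatr_eq0 -lt0n.
have -> : 2 * pi * (k %/ n * n + k %% n)%:R / n%:R
          = 2 * pi * (k %% n)%:R / n%:R + (pi *+ 2) *+ (k %/ n) :> R.
  by rewrite -mulrnA -mulr_natr natrD !natrM; field.
by rewrite (periodicn (@cosD2pi R)) (periodicn (@sinD2pi R)).
Qed.

(* The summation index g = n of [lam] becomes i = 0. *)
Lemma lamE (R : realType) n D k : (0 < n)%N ->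
  lam R n D k = \sum_(i < n | gcdn i n \in D) zeta R n (k * i).
Proof.
move=> n0; rewrite /lam big_nat_cond.
rewrite (eq_bigl (fun g => (1 <= g < n.+1)%N && (gcdn g n \in D))) -?big_nat_cond; last first.
  by move=> g; rewrite /ICG_conn ltnS; case: (1 <= g <= n)%N.
rewrite -(big_mkord (fun i => gcdn i n \in D) (fun i => zeta R n (k * i))).
rewrite big_mkcond [RHS]big_mkcond big_nat_recr //= [RHS]big_ltn //= gcdnn gcd0n addrC.
by rewrite -/(zeta R n (k * n)) zeta_mod // modnMl muln0.
Qed.

Lemma lam_mod (R : realType) n D k : (0 < n)%N -> lam R n D (k %% n) = lam R n D k.
Proof.
move=> n0; rewrite !lamE //; apply: eq_bigr => i _.
by rewrite zeta_mod // modnMml -zeta_mod.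
Qed.

Lemma lam_coprimeM (R : realType) n D k u : (0 < n)%N -> coprime u n ->
  lam R n D (u * k) = lam R n D k.
Proof.
move=> n0 cun; rewrite !lamE //.
pose h (i : 'I_n) : 'I_n := Ordinal (ltn_pmod (u * i) n0).
have h_inj : injective h.
  move=> i j /(congr1 val) /= hij; apply/val_inj.
  exact: coprime_mul_mod_inj cun (ltn_ord i) (ltn_ord j) hij.
rewrite [RHS](reindex_inj h_inj); apply: eq_big => i /=.
  by rewrite gcdn_modl [gcdn (u * i) n]gcdnC Gauss_gcdr 1?coprime_sym // gcdnC.
by move=> _; rewrite [RHS]zeta_mod // modnMmr -zeta_mod // mulnCA mulnA.
Qed.

Lemma lam_gcdn (R : realType) n D k : (0 < n)%N -> lam R n D (gcdn k n) = lam R n D k.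
Proof.
move=> n0; have [u cun uk] := gcdn_unit_multiple k n n0.
by rewrite -(lam_coprimeM _ _ _ _ _ n0 cun) -lam_mod // uk lam_mod.
Qed.

Theorem lemma3p16 (R : realType) (n : nat) (D1 D2 DR DT : pred nat) (d0 : nat) :
  (1 <= n)%N ->
  (forall d, d \in D1 -> (d %| n)%N && (d != n)) ->
  (forall d, d \in D2 -> (d %| n)%N && (d != n)) ->
  isospectral R n D1 D2 ->
  (forall d, d \in DR -> (d %| n)%N) ->
  (forall d, d \in DR -> lam R n D1 d = lam R n D2 d) ->
  (forall d, d \in DT -> (d %| n)%N && (d \notin DR)) ->
  d0 \in DT ->
  (forall d, d \in DT -> lam R n D1 d = lam R n D1 d0) ->
  ((n%:Z - (phisum n DR)%:Z - (phisum n DT)%:Z) < (phisum n DT)%:Z)%R ->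
  (exists2 d0', d0' \in DT & lam R n D2 d0' = lam R n D1 d0)
  /\ ((forall d, (d \in DT) = (d == d0)) -> lam R n D1 d0 = lam R n D2 d0).
Proof.
move=> n0 _ _ iso DRn DReq DTn _ DTeq ineq.
have DTdvd : {in DT, forall d, (d %| n)%N} by move=> d /DTn /andP[].
set v := lam R n D1 d0.
have [d0' d0'T d0'v] : exists2 d0', d0' \in DT & lam R n D2 d0' = v.
  have : has (predI (fun k => gcdn k n \in DT) (fun k => lam R n D2 k == v)) (iota 1 n).
    apply: (@has_count_pigeonhole _ _ _ (fun k => gcdn k n \in DR)
                                  (fun k => lam R n D1 k == v)).
    - move=> k _ kT; have /andP[_ kR] := DTn _ kT.
      by rewrite /= -(lam_gcdn _ _ _ k n0) DTeq // eqxx kR.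
    - by move=> k _ kR; rewrite /= -!(lam_gcdn _ _ _ k n0) DReq.
    - by move/permP: iso => /(_ (pred1 v)); rewrite /spectrum !count_map.
    - by rewrite size_iota !count_gcdn_in //; lia.
  by case/hasP => k _ /andP[kT /eqP kv]; exists (gcdn k n); rewrite ?lam_gcdn.
split; first by exists d0'.
by move=> DTE; move: d0'T; rewrite DTE => /eqP d0'E; rewrite -d0'v d0'E.
Qed.
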